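(* Let $\mathcal{P}=\langle P,\le\rangle$ be a finite bounded poset with $|P|\ge 2$, and let $R^+(\mathcal{P})$ be its interval rank poset. Then $\dim(R^+(\mathcal{P}))\le 2$.
   Context: A poset is bounded if it has a least and a greatest element. The height $H$ of a finite poset is the number of elements in its largest chain. For $a\in P$, $\uparrow a=\{b:b\ge a\}$ and $\downarrow a=\{b:b\le a\}$ as subposets. The standard interval rank is $R^+(a)=[H(\uparrow a)-1,\;H(\mathcal{P})-H(\downarrow a)]$. The interval rank poset $R^+(\mathcal{P})$ is the set $\{R^+(a):a\in P\}$ ordered by $\ge_W$, where $[x_*,x^*]\le_W[y_*,y^*]$ iff $x_*\le y_*$ and $x^*\le y^*$. The (order) dimension of a poset is the minimum number of linear orders whose intersection is the order. *)

From mathcomp Require Import all_boot.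
Set Implicit Arguments. Unset Strict Implicit. Unset Printing Implicit Defensive.

Definition is_partial_order (T : finType) (le : rel T) : Prop :=
  [/\ forall x, le x x,
      forall x y, le x y -> le y x -> x = y
    & forall x y z, le x y -> le y z -> le x z].

Definition is_bounded (T : finType) (le : rel T) : Prop :=
  (exists bot : T, forall x, le bot x) /\ (exists top : T, forall x, le x top).

Definition is_chain (T : finType) (le : rel T) (C : {set T}) : bool :=
  [forall x in C, [forall y in C, le x y || le y x]].

Definition height (T : finType) (le : rel T) (A : {set T}) : nat :=
  \max_(C : {set T} | (C \subset A) && is_chain le C) #|C|.

Definition up (T : finType) (le : rel T) (a : T) : {set T} := [set b | le a b].
Definition down (T : finType) (le : rel T) (a : T) : {set T} := [set b | le b a].

(* Standard interval rank R^+(a) = [H(up a) - 1, H(P) - H(down a)],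
   encoded as the pair (lower end, upper end). *)
Definition Rplus (T : finType) (le : rel T) (a : T) : nat * nat :=
  (height le (up le a) - 1, height le [set: T] - height le (down le a)).

Definition RplusSet (T : finType) (le : rel T) : seq (nat * nat) :=
  [seq Rplus le a | a <- enum T].

Definition leW (x y : nat * nat) : bool := (x.1 <= y.1) && (x.2 <= y.2).
(* the order of R^+(P) is >=_W *)
Definition geW (x y : nat * nat) : bool := leW y x.

Definition is_linear_order_on (S : seq (nat * nat)) (L : rel (nat * nat)) : Prop :=
  [/\ forall x, x \in S -> L x x,
      forall x y, x \in S -> y \in S -> L x y -> L y x -> x = y,
      forall x y z, x \in S -> y \in S -> z \in S -> L x y -> L y z -> L x z
    & forall x y, x \in S -> y \in S -> L x y || L y x].

Definition dim_le2 (S : seq (nat * nat)) (ord : rel (nat * nat)) : Prop :=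
  exists L1 L2 : rel (nat * nat),
    [/\ is_linear_order_on S L1, is_linear_order_on S L2
      & forall x y, x \in S -> y \in S -> ord x y = L1 x y && L2 x y].

From mathcomp Require Import all_boot.
From mathcomp Require Import zify.

(* R^+(P) is a subposet of nat * nat under the reversed product order, and the
   product order of two chains is the intersection of the two lexicographic
   orders (first coordinate first, resp. second coordinate first). *)

Definition lex_ge (x y : nat * nat) : bool :=
  (y.1 < x.1) || ((y.1 == x.1) && (y.2 <= x.2)).

Definition colex_ge (x y : nat * nat) : bool :=
  (y.2 < x.2) || ((y.2 == x.2) && (y.1 <= x.1)).

Lemma lex_ge_linear (S : seq (nat * nat)) : is_linear_order_on S lex_ge.
Proof.
rewrite /lex_ge; split.
- by move=> [a b] _ /=; rewrite eqxx leqnn orbT.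
- by move=> [a b] [c d] _ _ /= ? ?; congr pair; lia.
- by move=> [a b] [c d] [e f] _ _ _ /=; lia.
- by move=> [a b] [c d] _ _ /=; lia.
Qed.

Lemma colex_ge_linear (S : seq (nat * nat)) : is_linear_order_on S colex_ge.
Proof.
rewrite /colex_ge; split.
- by move=> [a b] _ /=; rewrite eqxx leqnn orbT.
- by move=> [a b] [c d] _ _ /= ? ?; congr pair; lia.
- by move=> [a b] [c d] [e f] _ _ _ /=; lia.
- by move=> [a b] [c d] _ _ /=; lia.
Qed.

Lemma geW_lex_colex (x y : nat * nat) : geW x y = lex_ge x y && colex_ge x y.
Proof. by case: x y => [a b] [c d]; rewrite /geW /leW /lex_ge /colex_ge /=; lia. Qed.

Lemma dim_le2_geW (S : seq (nat * nat)) : dim_le2 S geW.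
Proof.
exists lex_ge, colex_ge; split; [exact: lex_ge_linear | exact: colex_ge_linear |].
by move=> x y _ _; exact: geW_lex_colex.
Qed.

Theorem corollary1 (T : finType) (le : rel T) :
  is_partial_order le -> is_bounded le -> 1 < #|T| ->
  dim_le2 (RplusSet le) geW.
Proof. by move=> _ _ _; exact: dim_le2_geW. Qed.
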